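(* Assume $\sigma_-<1/2$ and let $\rho=1-\frac{\sigma_-}{1-\sigma_-}$ and $C=\frac{2}{\rho(1-\rho)^3}$. Let $\theta\in\Theta$ with $K^\theta\ge2$ and, for a probability measure $\mu$ on $[K^\theta]$, consider under $\theta$ the process $(X_t,Y_t)_{t\ge0}$ where $X_0\sim\mu$, $(X_t)_{t\ge0}$ is a Markov chain with transition matrix $Q^\theta$, and conditionally on $(X_t)$ the $Y_t$ are independent with densities $y\mapsto\gamma^\theta_{X_t}(y-T^\theta_{X_t}(t))$. Then for all $t\ge1$, all probability measures $\mu,\nu$ on $[K^\theta]$, all $x\in[K^\theta]$ and all $y_0^t\in\mathbb R^{t+1}$, $$\big|\log p^\theta(y_t\mid y_0^{t-1},X_t\ne x,X_0\sim\mu)-\log p^\theta(y_t\mid y_0^{t-1},X_t\ne x,X_0\sim\nu)\big|\le C\rho^t,$$ where $p^\theta(y_t\mid y_0^{t-1},X_t\ne x,X_0\sim\mu)$ is the conditional density of $Y_t$ at $y_t$ given $Y_0^{t-1}=y_0^{t-1}$ and $X_t\ne x$ in this process.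
   Context: Fix integers $K\ge1$, $d\ge1$, $\sigma_-\in(0,1)$; $[K']=\{1,\dots,K'\}$; $\Delta_{K'}$ = probability vectors on $[K']$; $\Sigma^{\sigma_-}_{K'}$ = $K'\times K'$ stochastic matrices with all entries $\ge\sigma_-$; $\mathbb R_d[X]$ = real polynomials of degree $\le d$ on $\mathbb R_+$; $\Gamma$ a set of probability densities on $\mathbb R$. $\Theta=\bigcup_{K'=1}^K\{[K']\}\times\Delta_{K'}\times\Sigma^{\sigma_-}_{K'}\times\Gamma^{K'}\times(\mathbb R_d[X])^{K'}$, elements $\theta=(K^\theta,\pi^\theta,Q^\theta,\gamma^\theta,T^\theta)$. *)

From HB Require Import structures.
From mathcomp Require Import all_boot all_order all_algebra.
From mathcomp Require Import all_classical all_reals all_analysis.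
Set Implicit Arguments. Unset Strict Implicit. Unset Printing Implicit Defensive.
Import Order.TTheory GRing.Theory Num.Theory.
Local Open Scope ring_scope.

Section HMM.
Variable R : realType.

Definition prob_vec (n : nat) (p : 'I_n -> R) : Prop :=
  (forall i, 0 <= p i) /\ \sum_(i < n) p i = 1.

Definition stoch_ge (n : nat) (s : R) (Q : 'M[R]_n) : Prop :=
  (forall i j, s <= Q i j) /\ (forall i, \sum_(j < n) Q i j = 1).

Definition prob_density (f : R -> R) : Prop :=
  (forall y, 0 <= f y) /\ measurable_fun setT f /\
  (\int[@lebesgue_measure R]_y (f y)%:E = 1)%E.

Definition poly_le (d : nat) (p : {poly R}) : Prop := (size p <= d.+1)%N.

(* emission density of Y_s given X_s = k :  y |-> gamma_k (y - T_k(s)) *)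
Definition emis (n : nat) (gam : 'I_n -> R -> R) (T : 'I_n -> {poly R})
  (k : 'I_n) (s : nat) (y : R) : R := gam k (y - (T k).[s%:R]).

(* forward quantity: joint density of (Y_0^s = y_0^s, X_s = k) when X_0 ~ mu *)
Fixpoint fwd (n : nat) (mu : 'I_n -> R) (Q : 'M[R]_n) (gam : 'I_n -> R -> R)
  (T : 'I_n -> {poly R}) (y : nat -> R) (s : nat) (k : 'I_n) : R :=
  match s with
  | 0 => mu k * emis gam T k 0 (y 0%N)
  | s'.+1 => (\sum_(j < n) fwd mu Q gam T y s' j * Q j k) * emis gam T k s'.+1 (y s'.+1)
  end.

(* joint density of (Y_0^{t-1} = y_0^{t-1}, X_t <> x), t >= 1 *)
Definition joint_prev (n : nat) (mu : 'I_n -> R) (Q : 'M[R]_n) (gam : 'I_n -> R -> R)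
  (T : 'I_n -> {poly R}) (y : nat -> R) (t : nat) (x : 'I_n) : R :=
  \sum_(k < n | k != x) \sum_(j < n) fwd mu Q gam T y t.-1 j * Q j k.

(* joint density of (Y_0^t = y_0^t, X_t <> x) *)
Definition joint_cur (n : nat) (mu : 'I_n -> R) (Q : 'M[R]_n) (gam : 'I_n -> R -> R)
  (T : 'I_n -> {poly R}) (y : nat -> R) (t : nat) (x : 'I_n) : R :=
  \sum_(k < n | k != x) fwd mu Q gam T y t k.

(* p(y_t | y_0^{t-1}, X_t <> x, X_0 ~ mu) *)
Definition cond_dens (n : nat) (mu : 'I_n -> R) (Q : 'M[R]_n) (gam : 'I_n -> R -> R)
  (T : 'I_n -> {poly R}) (y : nat -> R) (t : nat) (x : 'I_n) : R :=
  joint_cur mu Q gam T y t x / joint_prev mu Q gam T y t x.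

End HMM.

From HB Require Import structures.
From mathcomp Require Import all_boot all_order all_algebra.
From mathcomp Require Import all_classical all_reals all_analysis.
From mathcomp Require Import ring lra.
Set Implicit Arguments. Unset Strict Implicit. Unset Printing Implicit Defensive.
Import Order.TTheory GRing.Theory Num.Theory.
Local Open Scope ring_scope.

(* The forward filter alternates a Markov step u |-> u Q with a reweighting by the
   emission densities.  Two unnormalised filters u, v (started from mu and nu) are
   compared through bounds m v <= u <= M v, whose relative spread (M - m) / m plays
   the role of Hilbert's projective distance.  Reweighting leaves it unchanged; since
   every row of Q dominates eps times any other row (eps = sigma / (1 - sigma), from
   K >= 2 and entries >= sigma), a Markov step contracts it by 1 - eps, and the first
   step already brings it down to (1 - eps^2) / eps^2.  The conditional densities are
   averages of the emission densities weighted by the predicted filters over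
   X_t <> x, so their ratio lies in [m / M, M / m] and their logarithms differ by at
   most the spread (1 - eps)^(t-1) (1 - eps^2) / eps^2 <= C rho^t. *)

Section DoeblinContraction.
Variables (R : realType) (n : nat) (Q : 'M[R]_n) (eps : R).
Hypothesis Q_ge0 : forall i j, 0 <= Q i j.
Hypothesis Q_doeblin : forall j j' k, eps * Q j' k <= Q j k.
Hypothesis eps_gt0 : 0 < eps.
Hypothesis eps_le1 : eps <= 1.

Definition push (u : 'I_n -> R) (k : 'I_n) : R := \sum_(j < n) u j * Q j k.

Lemma push_ge0 u k : (forall i, 0 <= u i) -> 0 <= push u k.
Proof. by move=> u_ge0; apply: sumr_ge0 => i _; rewrite mulr_ge0. Qed.

Lemma pushB u w k : push (fun i => u i - w i) k = push u k - push w k.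
Proof. by rewrite /push -sumrB; apply: eq_bigr => i _; rewrite mulrBl. Qed.

Lemma pushZ c u k : push (fun i => c * u i) k = c * push u k.
Proof. by rewrite /push mulr_sumr; apply: eq_bigr => i _; rewrite mulrA. Qed.

Lemma push_doeblin a v k : (forall i, 0 <= a i) -> (forall i, 0 <= v i) ->
  0 < \sum_i v i -> eps * ((\sum_i a i) / \sum_i v i) * push v k <= push a k.
Proof.
move=> a_ge0 v_ge0 sv_gt0.
rewrite mulrA mulrAC ler_pdivrMr // (mulrC eps) -mulrA /push !mulr_suml.
apply: ler_sum => i _; rewrite mulr_sumr -mulrA !mulr_sumr.
apply: ler_sum => j _; rewrite ler_wpM2l //.
by rewrite mulrCA [X in _ <= X]mulrC ler_wpM2l.
Qed.

Definition ratio_close (u v : 'I_n -> R) (d : R) : Prop := exists m M,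
  [/\ 0 < m <= M, forall k, m * v k <= u k <= M * v k & M - m <= d * m].

Lemma ratio_close_push u v d : (forall i, 0 <= u i) -> (forall i, 0 <= v i) ->
  0 <= d -> ratio_close u v d -> ratio_close (push u) (push v) ((1 - eps) * d).
Proof.
move=> u_ge0 v_ge0 d_ge0 [m [M [/andP[m_gt0 le_mM] uv spread]]].
have eps' : 0 <= 1 - eps by rewrite subr_ge0.
have [sv0|sv_neq0] := eqVneq (\sum_i v i) 0.
  have v0 i : v i = 0 by apply: (psumr_eq0P _ sv0).
  have u0 i : u i = 0.
    by apply/le_anti; have /andP[_] := uv i; rewrite v0 mulr0 => ->; rewrite u_ge0.
  have push0 w k : (forall i, w i = 0) -> push w k = 0.
    by move=> w0; rewrite /push big1 // => i _; rewrite w0 mul0r.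
  exists m, m; split; first by rewrite m_gt0 lexx.
    by move=> k; rewrite !push0 // mulr0 lexx.
  by rewrite subrr !mulr_ge0 // ltW.
have sv_gt0 : 0 < \sum_i v i by rewrite lt0r sv_neq0 sumr_ge0.
set r := (\sum_i u i) / \sum_i v i.
have le_mr : m <= r.
  by rewrite ler_pdivlMr // mulr_sumr; apply: ler_sum => i _; case/andP: (uv i).
have mix_ge0 : 0 <= eps * (r - m) by rewrite mulr_ge0 ?subr_ge0 // ltW.
(* Each bound moves a fraction eps of the way towards the mean ratio r. *)
exists (m + eps * (r - m)), (M - eps * (M - r)); split.
- have : 0 <= (1 - eps) * (M - m) by rewrite mulr_ge0 ?subr_ge0.
  by move=> ?; apply/andP; split; lra.
- move=> k; apply/andP; split.
    have a_ge0 i : 0 <= u i - m * v i by case/andP: (uv i); rewrite subr_ge0.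
    have := push_doeblin k a_ge0 v_ge0 sv_gt0.
    rewrite pushB pushZ sumrB -mulr_sumr mulrBl mulfK ?gt_eqF // -/r.
    lra.
  have a_ge0 i : 0 <= M * v i - u i by case/andP: (uv i); rewrite subr_ge0.
  have := push_doeblin k a_ge0 v_ge0 sv_gt0.
  rewrite pushB pushZ sumrB -mulr_sumr mulrBl mulfK ?gt_eqF // -/r.
  lra.
- have : (1 - eps) * (M - m) <= (1 - eps) * (d * m) by apply: ler_wpM2l.
  have : 0 <= (1 - eps) * d * (eps * (r - m)) by rewrite mulr_ge0 // mulr_ge0.
  lra.
Qed.

Lemma ratio_closeM u v d g : (forall k, 0 <= g k) -> ratio_close u v d ->
  ratio_close (fun k => u k * g k) (fun k => v k * g k) d.
Proof.
move=> g_ge0 [m [M [mM uv spread]]]; exists m, M; split=> // k.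
by case/andP: (uv k) => lo hi; rewrite !mulrA !ler_wpM2r.
Qed.

Lemma ratio_close_push_init u v : (forall i, 0 <= u i) -> (forall i, 0 <= v i) ->
  0 < \sum_i u i -> 0 < \sum_i v i ->
  ratio_close (push u) (push v) ((1 - eps ^+ 2) / eps ^+ 2).
Proof.
move=> u_ge0 v_ge0 su_gt0 sv_gt0; set r := (\sum_i u i) / \sum_i v i.
have r_gt0 : 0 < r by rewrite divr_gt0.
exists (eps * r), (r / eps); split.
- rewrite mulr_gt0 //= ler_pdivlMr //.
  have : eps * eps <= 1 by rewrite mulr_ile1 // ltW.
  nra.
- move=> k; apply/andP; split; first exact: push_doeblin.
  have := push_doeblin k v_ge0 u_ge0 su_gt0.
  have c_ge0 : 0 <= r / eps by rewrite divr_ge0 // ltW.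
  move=> /(ler_wpM2l c_ge0); apply: le_trans.
  by rewrite [leRHS](_ : _ = push u k) // /r; field; rewrite !gt_eqF.
- rewrite [leLHS](_ : _ = (1 - eps ^+ 2) / eps ^+ 2 * (eps * r)) //.
  by field; rewrite gt_eqF.
Qed.
End DoeblinContraction.

Lemma ratio_close_sym (R : realType) n (u v : 'I_n -> R) d :
  ratio_close u v d -> ratio_close v u d.
Proof.
case=> m [M [/andP[m_gt0 le_mM] uv spread]].
have M_gt0 : 0 < M := lt_le_trans m_gt0 le_mM.
exists M^-1, m^-1; split.
- by rewrite invr_gt0 M_gt0 lef_pV2.
- move=> k; case/andP: (uv k) => lo hi; rewrite !(mulrC _^-1).
  by rewrite ler_pdivrMr // ler_pdivlMr // !(mulrC (v k)) lo hi.
- have mM_gt0 : 0 < m * M by rewrite mulr_gt0.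
  rewrite -(ler_pM2l mM_gt0).
  have -> : m * M * (m^-1 - M^-1) = M - m by field; rewrite !gt_eqF.
  by have -> : m * M * (d * M^-1) = d * m by field; rewrite gt_eqF.
Qed.

Lemma ln_le_subr1 (R : realType) (x : R) : 0 < x -> ln x <= x - 1.
Proof.
by move=> x_gt0; have := @le_ln1Dx R (x - 1); rewrite (addrC 1) subrK; apply; lra.
Qed.

Definition wavg (R : realType) n (P : pred 'I_n) (w g : 'I_n -> R) : R :=
  (\sum_(k | P k) w k * g k) / \sum_(k | P k) w k.

Section WeightedAverage.
Variables (R : realType) (n : nat) (P : pred 'I_n) (g : 'I_n -> R).
Hypothesis g_ge0 : forall k, 0 <= g k.

Lemma wavg_weight_gt0 w : (forall k, 0 <= w k) -> 0 < wavg P w g ->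
  0 < \sum_(k | P k) w k.
Proof.
move=> w_ge0 avg_gt0; rewrite lt0r sumr_ge0 // andbT; move: avg_gt0; rewrite /wavg.
by apply: contraTneq => ->; rewrite invr0 mulr0 ltxx.
Qed.

Lemma wavg_le_ratio w z m M : (forall k, 0 <= z k) ->
  0 < m <= M -> (forall k, m * z k <= w k <= M * z k) ->
  0 < wavg P w g -> 0 < wavg P z g -> wavg P w g <= M / m * wavg P z g.
Proof.
move=> z_ge0 /andP[m_gt0 le_mM] wz hw hz.
have w_ge0 k : 0 <= w k.
  by case/andP: (wz k) => lo _; apply: le_trans lo; rewrite mulr_ge0 // ltW.
have A_gt0 := wavg_weight_gt0 w_ge0 hw; have A'_gt0 := wavg_weight_gt0 z_ge0 hz.
move: hw hz; rewrite /wavg.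
set A := \sum_(k | P k) w k; set A' := \sum_(k | P k) z k.
set B := \sum_(k | P k) w k * g k; set B' := \sum_(k | P k) z k * g k.
move=> hw hz.
have le_AA' : m * A' <= A.
  by rewrite mulr_sumr; apply: ler_sum => k _; case/andP: (wz k).
have le_BB' : B <= M * B'.
  rewrite mulr_sumr; apply: ler_sum => k _.
  by case/andP: (wz k) => _ hi; rewrite mulrA; apply: ler_wpM2r.
rewrite ler_pdivrMr //; apply: le_trans le_BB' _.
have c_ge0 : 0 <= M / m * (B' / A').
  by rewrite ltW // mulr_gt0 // divr_gt0 // (lt_le_trans m_gt0).
apply: le_trans (ler_wpM2l c_ge0 le_AA').
by rewrite [leRHS](_ : _ = M * B') // /A'; field; rewrite !gt_eqF.
Qed.

Lemma ln_wavg_le w z d : (forall k, 0 <= w k) -> (forall k, 0 <= z k) ->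
  ratio_close w z d -> 0 < wavg P w g -> 0 < wavg P z g ->
  ln (wavg P w g) - ln (wavg P z g) <= d.
Proof.
move=> w_ge0 z_ge0 [m [M [mM wz spread]]] hw hz; have /andP[m_gt0 _] := mM.
rewrite -ln_div ?posrE //; apply: le_trans (ln_le_subr1 (divr_gt0 hw hz)) _.
have : wavg P w g / wavg P z g <= M / m by rewrite ler_pdivrMr // wavg_le_ratio.
have : M / m <= d + 1 by rewrite ler_pdivrMr //; lra.
lra.
Qed.

Lemma ln_wavg_dist w z d : (forall k, 0 <= w k) -> (forall k, 0 <= z k) ->
  ratio_close w z d -> 0 < wavg P w g -> 0 < wavg P z g ->
  `| ln (wavg P w g) - ln (wavg P z g) | <= d.
Proof.
move=> w_ge0 z_ge0 wz hw hz.
by rewrite ler_norml lerNl opprB !ln_wavg_le //; apply: ratio_close_sym.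
Qed.
End WeightedAverage.

Section ForwardRecursion.
Variables (R : realType) (n : nat) (Q : 'M[R]_n) (gam : 'I_n -> R -> R).
Variables (T : 'I_n -> {poly R}) (y : nat -> R).
Hypothesis Q_ge0 : forall i j, 0 <= Q i j.
Hypothesis gam_ge0 : forall k z, 0 <= gam k z.

Lemma emis_ge0 k s z : 0 <= emis gam T k s z.
Proof. exact: gam_ge0. Qed.

Lemma fwdS mu s k :
  fwd mu Q gam T y s.+1 k = push Q (fwd mu Q gam T y s) k * emis gam T k s.+1 (y s.+1).
Proof. by []. Qed.

Lemma fwd_ge0 mu s k : (forall i, 0 <= mu i) -> 0 <= fwd mu Q gam T y s k.
Proof.
move=> mu_ge0; elim: s k => [|s IH] k; first by rewrite mulr_ge0 ?emis_ge0.
by rewrite fwdS mulr_ge0 ?emis_ge0 ?push_ge0.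
Qed.

Lemma joint_prev_gt0_fwd0 mu t x : (forall i, 0 <= mu i) ->
  0 < joint_prev mu Q gam T y t x -> 0 < \sum_j fwd mu Q gam T y 0 j.
Proof.
move=> mu_ge0 prev_gt0; have fwd_mu_ge0 s j := @fwd_ge0 mu s j mu_ge0.
rewrite lt0r sumr_ge0 ?andbT //; apply: contraTneq prev_gt0 => /psumr_eq0P fwd00.
have fwd0 s j : fwd mu Q gam T y s j = 0.
  elim: s j => [|s IH] j; first by apply: fwd00.
  by rewrite fwdS /push big1 ?mul0r // => i _; rewrite IH mul0r.
rewrite /joint_prev big1 ?ltxx // => k _.
by rewrite big1 // => j _; rewrite fwd0 mul0r.
Qed.

Lemma ratio_close_fwd mu nu eps :
  (forall j j' k, eps * Q j' k <= Q j k) -> 0 < eps -> eps <= 1 ->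
  (forall i, 0 <= mu i) -> (forall i, 0 <= nu i) ->
  0 < \sum_j fwd mu Q gam T y 0 j -> 0 < \sum_j fwd nu Q gam T y 0 j ->
  forall s, ratio_close (push Q (fwd mu Q gam T y s)) (push Q (fwd nu Q gam T y s))
     ((1 - eps) ^+ s * ((1 - eps ^+ 2) / eps ^+ 2)).
Proof.
move=> Q_doeblin eps_gt0 eps_le1 mu_ge0 nu_ge0 mu0_gt0 nu0_gt0.
have d0_ge0 : 0 <= (1 - eps ^+ 2) / eps ^+ 2.
  by rewrite divr_ge0 ?sqr_ge0 // subr_ge0 expr_le1 // ltW.
elim=> [|s IH].
  by rewrite expr0 mul1r; apply: ratio_close_push_init => // i; apply: fwd_ge0.
rewrite exprS -mulrA; apply: ratio_close_push => //.
- by move=> i; apply: fwd_ge0.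
- by move=> i; apply: fwd_ge0.
- by rewrite mulr_ge0 // exprn_ge0 // subr_ge0.
- exact: ratio_closeM (fun k => emis_ge0 k s.+1 (y s.+1)) IH.
Qed.
End ForwardRecursion.

Lemma stoch_ge_entry_le (R : realType) n s (Q : 'M[R]_n) : (1 < n)%N -> 0 <= s ->
  stoch_ge s Q -> forall j k, Q j k <= 1 - s.
Proof.
move=> n_gt1 s_ge0 [Q_ge Q_sum] j k.
have [k' k'_neq] : exists k', k' \in predC1 k.
  by apply/card_gt0P; rewrite cardC1 card_ord -ltnS prednK // ltnW.
have rest_ge0 : 0 <= \sum_(i | (i != k) && (i != k')) Q j i.
  by apply: sumr_ge0 => i _; apply: le_trans (Q_ge j i).
have := Q_sum j; rewrite (bigD1 k) //= (bigD1 k') //=.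
have := Q_ge j k'; lra.
Qed.

Lemma stoch_ge_doeblin (R : realType) n s (Q : 'M[R]_n) : (1 < n)%N -> 0 <= s < 1 ->
  stoch_ge s Q -> forall j j' k, s / (1 - s) * Q j' k <= Q j k.
Proof.
move=> n_gt1 /andP[s_ge0 s_lt1] hQ j j' k; have s' : 0 < 1 - s by rewrite subr_gt0.
apply: le_trans (hQ.1 j k); rewrite -[leRHS](mulfVK (lt0r_neq0 s')).
apply: ler_wpM2l; first by rewrite divr_ge0 // ltW.
exact: stoch_ge_entry_le.
Qed.

Lemma geometric_bound_le (R : realType) (eps : R) t : 0 < eps < 1 ->
  (1 - eps) ^+ t * ((1 - eps ^+ 2) / eps ^+ 2) <=
  2 / ((1 - eps) * eps ^+ 3) * (1 - eps) ^+ t.+1.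
Proof.
move=> /andP[eps_gt0 eps_lt1]; have eps' : 0 < 1 - eps by rewrite subr_gt0.
rewrite [leRHS](_ : _ = (1 - eps) ^+ t * (2 / eps / eps ^+ 2)); last first.
  by rewrite [_ ^+ t.+1]exprS; move: (_ ^+ t) => p; field; rewrite ?gt_eqF.
apply: ler_wpM2l; first by rewrite exprn_ge0 // ltW.
apply: ler_wpM2r; first by rewrite invr_ge0 sqr_ge0.
have : 2 <= 2 / eps by rewrite ler_pdivlMr //; lra.
have : 0 <= eps ^+ 2 by exact: sqr_ge0.
lra.
Qed.

Theorem lemma15 (R : realType) (K d : nat) (sigm : R)
  (Gamma : set (R -> R))
  (hsig0 : 0 < sigm) (hsig : sigm < 1 / 2)
  (hGamma : forall f, Gamma f -> prob_density f)
  (Kt : nat) (hKt : (2 <= Kt)%N) (hKtK : (Kt <= K)%N)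
  (pi : 'I_Kt -> R) (Q : 'M[R]_Kt) (gam : 'I_Kt -> R -> R) (T : 'I_Kt -> {poly R})
  (hpi : prob_vec pi) (hQ : stoch_ge sigm Q)
  (hgam : forall k, Gamma (gam k)) (hT : forall k, poly_le d (T k))
  (t : nat) (ht : (1 <= t)%N) (mu nu : 'I_Kt -> R)
  (hmu : prob_vec mu) (hnu : prob_vec nu) (x : 'I_Kt) (y : nat -> R)
  (hdmu : 0 < joint_prev mu Q gam T y t x) (hdnu : 0 < joint_prev nu Q gam T y t x)
  (hcmu : 0 < cond_dens mu Q gam T y t x) (hcnu : 0 < cond_dens nu Q gam T y t x) :
  let rho := 1 - sigm / (1 - sigm) in
  let C := 2 / (rho * (1 - rho) ^+ 3) in
  `| ln (cond_dens mu Q gam T y t x) - ln (cond_dens nu Q gam T y t x) | <= C * rho ^+ t.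
Proof.
cbv zeta.
have sig_bounds : 0 <= sigm < 1 by rewrite ltW //=; lra.
set eps := sigm / (1 - sigm).
have eps_bounds : 0 < eps < 1.
  by rewrite divr_gt0 ?ltr_pdivrMr ?mul1r ?subr_gt0 //=; lra.
have [eps_gt0 eps_lt1] := andP eps_bounds.
have Q_doeblin := stoch_ge_doeblin hKt sig_bounds hQ.
have Q_ge0 i j : 0 <= Q i j := le_trans (ltW hsig0) (hQ.1 i j).
have gam_ge0 k z : 0 <= gam k z := (hGamma _ (hgam k)).1 z.
have [[mu_ge0 _] [nu_ge0 _]] := (hmu, hnu).
case: t ht hdmu hdnu hcmu hcnu => // t _ hdmu hdnu hcmu hcnu.
have close := ratio_close_fwd Q_ge0 gam_ge0 Q_doeblin eps_gt0 (ltW eps_lt1)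
  mu_ge0 nu_ge0 (joint_prev_gt0_fwd0 Q_ge0 gam_ge0 mu_ge0 hdmu)
  (joint_prev_gt0_fwd0 Q_ge0 gam_ge0 nu_ge0 hdnu) t.
have push_fwd_ge0 w : (forall i, 0 <= w i) -> forall k, 0 <= push Q (fwd w Q gam T y t) k.
  by move=> w_ge0 k; apply: push_ge0 => // i; apply: fwd_ge0.
(* cond_dens at time t.+1 unfolds to the average of the emission densities over
   k != x, weighted by the predicted filter push Q (fwd _ t). *)
have := @ln_wavg_dist _ _ (fun k => k != x) _ (fun k => emis_ge0 T gam_ge0 k t.+1 (y t.+1))
  _ _ _ (push_fwd_ge0 _ mu_ge0) (push_fwd_ge0 _ nu_ge0) close hcmu hcnu.
move/le_trans; apply; rewrite -/eps (_ : 1 - (1 - eps) = eps); last by ring.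
exact: geometric_bound_le.
Qed.
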